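(* Let $\gamma>0$. Define a positive sequence $(a_n)_{n\ge 1}$ by $a_n = a_1\,(n\ln^2 n)^{-1}$ for $n\ge 2$, where $a_1>0$ is chosen so that $\sum_{n=1}^\infty a_n=\gamma/2$. Then the infinite product $$w_\gamma(t)=c_\gamma\prod_{n=1}^\infty\Big(\frac{\sin(a_n t)}{a_n t}\Big)^2$$ defines an even, non-negative function $w_\gamma\in L^1(\mathbb{R})$, and $c_\gamma>0$ can be chosen so that $\int_{\mathbb{R}} w_\gamma(t)\,dt=1$. With this choice, for all $t\ge \mathrm{e}^{1/\sqrt2}/\gamma$, $$0\le w_\gamma(t)\le 2(\mathrm{e}\gamma)^2\, t\,\exp\Big(-\frac{2}{7}\,\frac{\gamma t}{\ln^2(\gamma t)}\Big).$$ *)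

From Stdlib Require Import Reals Lra.
Open Scope R_scope.

Definition sinc (x : R) : R := if Req_EM_T x 0 then 1 else sin x / x.

(* The sequence a_n (n >= 1): a_1 = a1, a_n = a1 / (n ln^2 n) for n >= 2.
   (The value at n = 0 is irrelevant and never used.) *)
Definition aseq (a1 : R) (n : nat) : R :=
  if (n <=? 1)%nat then a1 else a1 / (INR n * (ln (INR n))^2).

Fixpoint partial_prod (a1 : R) (N : nat) (t : R) : R :=
  match N with
  | O => 1
  | S k => partial_prod a1 k t * (sinc (aseq a1 (S k) * t))^2
  end.

(* f is in L^1(R) as a non-negative locally Riemann-integrable function whose
   improper integral over R exists, with value I:
   lim_{M -> +oo} int_{-M}^{M} f = I. *)
Definition improper_integral_R (f : R -> R) (I : R) : Prop :=
  (forall a b, inhabited (Riemann_integrable f a b)) /\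
  forall eps, eps > 0 -> exists M0, forall M (pr : Riemann_integrable f (-M) M),
      M >= M0 -> Rabs (RiemannInt pr - I) < eps.

(* The partial products are decreasing in [0, 1], so they converge; they are
   even and continuous, and since [sinc^2 x >= 1 - x^2/3] and [a_n <= sum a],
   the tail after N factors costs at most [t^2 sum(a) (sum_{n>N} a_n) / 3],
   so the convergence is locally uniform and the limit W is continuous.
   Bounding W by the first factor gives [W t <= 2 / (1 + (a_1 t)^2)], whose
   integral is at most [2 pi / a_1], while [W >= 11/12] near 0: this yields
   the normalising constant [c <= 6 gamma / 11].  For the decay, W is at most
   the product of the first N factors [(a_n t)^-2]; choosing N close to
   [a_1 t / ln^2 (a_1 t)] and using [a_1 >= 2 gamma / 13] (a telescoping
   comparison of [sum 1/(n ln^2 n)] with [1/ln n]) gives the bound for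
   [ln (gamma t) >= 7]; below that, the right-hand side exceeds [c]. *)

From Stdlib Require Import Reals Lra Lia Factorial ZArith.
Open Scope R_scope.

(** * Elementary estimates for exp and ln *)

Lemma exp_le_compat x y : x <= y -> exp x <= exp y.
Proof. intros [Hlt | ->]; [left; exact (exp_increasing _ _ Hlt) | lra]. Qed.

Lemma ln_le_compat x y : 0 < x -> x <= y -> ln x <= ln y.
Proof. intros Hx [Hlt | ->]; [left; exact (ln_increasing _ _ Hx Hlt) | lra]. Qed.

Lemma ln_le_sub_1 x : 0 < x -> ln x <= x - 1.
Proof. intro Hx. pose proof (exp_ineq1_le (ln x)). rewrite exp_ln in *; lra. Qed.

Lemma ln_succ_sub_ge p : 0 < p -> 1 / (p + 1) <= ln (p + 1) - ln p.
Proof.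
  intro Hp. pose proof (ln_le_sub_1 (p / (p + 1)) ltac:(apply Rdiv_lt_0_compat; lra)) as H.
  unfold Rdiv in H. rewrite ln_mult, ln_Rinv in H by (try apply Rinv_0_lt_compat; lra).
  replace (p * / (p + 1) - 1) with (- (1 / (p + 1))) in H by (field; lra). lra.
Qed.

Lemma div_le_div_cross a b c d : 0 < b -> 0 < d -> a * d <= c * b -> a / b <= c / d.
Proof.
  intros Hb Hd H. apply Rmult_le_reg_r with (b * d); [nra |].
  replace (a / b * (b * d)) with (a * d) by (field; lra).
  replace (c / d * (b * d)) with (c * b) by (field; lra). lra.
Qed.

Lemma exp_INR_mult k y : exp (INR k * y) = exp y ^ k.
Proof.
  induction k as [|k IH]; [rewrite Rmult_0_l; apply exp_0 |].
  rewrite S_INR, Rmult_plus_distr_r, Rmult_1_l, exp_plus, IH. simpl. ring.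
Qed.

Lemma pow_one_plus_div_le_exp k w : (1 <= k)%nat -> 0 <= w -> (1 + w / INR k) ^ k <= exp w.
Proof.
  intros Hk Hw. assert (0 < INR k) by (apply lt_0_INR; lia).
  replace w with (INR k * (w / INR k)) at 2 by (field; lra).
  rewrite exp_INR_mult. apply pow_incr. split; [| apply exp_ineq1_le].
  assert (0 <= w / INR k) by (apply Rmult_le_pos; [lra | left; apply Rinv_0_lt_compat; lra]). lra.
Qed.

(* Partial sums of order 7 and 6 of the alternating series [sum (-1)^n / n!]. *)
Lemma exp_neg_1_bounds : 1854/5040 <= exp (-1) <= 265/720.
Proof.
  unfold exp; destruct (exist_exp (-1)) as [x e]; simpl; unfold exp_in in e.
  assert (H := alternated_series_ineq (fun i => / INR (fact i)) x 3).
  enough (Hx : sum_f_R0 (tg_alt (fun i => / INR (fact i))) (S (2 * 3)) <= x <=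
               sum_f_R0 (tg_alt (fun i => / INR (fact i))) (2 * 3)).
  { destruct Hx as [H0 H1]. simpl in H0, H1; unfold tg_alt in H0, H1; simpl in H0, H1. lra. }
  apply H.
  - intro n. apply Rinv_le_contravar; [apply INR_fact_lt_0 |].
    apply le_INR, fact_le; lia.
  - intros eps Heps. destruct (cv_speed_pow_fact 1 eps Heps) as [N HN]. exists N.
    intros n Hn. rewrite <- (Rmult_1_l (/ INR (fact n))), <- (pow1 n). exact (HN n Hn).
  - intros eps Heps. destruct (e eps Heps) as [N HN]. exists N. intros n Hn.
    unfold tg_alt. erewrite sum_eq; [exact (HN n Hn) |]. intros; apply Rmult_comm.
Qed.

Lemma exp_1_bounds : 2716/1000 <= exp 1 <= 840/309.
Proof.
  destruct exp_neg_1_bounds as [H1 H2].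
  assert (E : exp (-1) * exp 1 = 1) by (rewrite <- exp_plus; replace (-1 + 1) with 0 by ring; apply exp_0).
  pose proof (exp_pos 1). split; nra.
Qed.

Lemma exp_INR_le k : exp (INR k) <= (840/309) ^ k.
Proof.
  rewrite <- (Rmult_1_r (INR k)), exp_INR_mult.
  apply pow_incr. pose proof exp_1_bounds. pose proof (exp_pos 1). lra.
Qed.

Lemma exp_INR_ge k : (2716/1000) ^ k <= exp (INR k).
Proof.
  rewrite <- (Rmult_1_r (INR k)), exp_INR_mult.
  apply pow_incr. pose proof exp_1_bounds. lra.
Qed.

Lemma ln_ge_of_exp_le x y : 0 < y -> exp x <= y -> x <= ln y.
Proof. intros Hy H. rewrite <- (ln_exp x). apply ln_le_compat; [apply exp_pos | exact H]. Qed.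

Lemma ln_2_ge : 9/13 <= ln 2.
Proof.
  assert (H : exp (INR 9) <= 2 ^ 13) by (eapply Rle_trans; [apply exp_INR_le | simpl; lra]).
  apply ln_ge_of_exp_le in H; [| apply pow_lt; lra].
  rewrite ln_pow in H by lra. simpl in H. lra.
Qed.

Lemma ln_3_ge : 12/11 <= ln 3.
Proof.
  assert (H : exp (INR 12) <= 3 ^ 11) by (eapply Rle_trans; [apply exp_INR_le | simpl; lra]).
  apply ln_ge_of_exp_le in H; [| apply pow_lt; lra].
  rewrite ln_pow in H by lra. simpl in H. lra.
Qed.

Lemma ln_13_2_bounds : 3/2 <= ln (13/2) <= 2.
Proof.
  split.
  - apply ln_ge_of_exp_le; [lra |].
    assert (H : exp (3/2) ^ 2 <= (13/2) ^ 2).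
    { rewrite <- exp_INR_mult. replace (INR 2 * (3/2)) with (INR 3) by (simpl; field).
      eapply Rle_trans; [apply exp_INR_le | lra]. }
    pose proof (exp_pos (3/2)). nra.
  - replace 2 with (INR 2) at 2 by (simpl; ring). rewrite <- (ln_exp (INR 2)).
    apply ln_le_compat; [lra |]. eapply Rle_trans; [| apply exp_INR_ge]. lra.
Qed.

Lemma exp_ge_3_sq v : 5 <= v -> 3 * v ^ 2 <= exp v.
Proof.
  intro Hv. replace v with (INR 5 + (v - 5)) at 2 by (simpl; ring). rewrite exp_plus.
  assert (E5 : 143 <= exp (INR 5)) by (eapply Rle_trans; [| apply exp_INR_ge]; lra).
  pose proof (pow_one_plus_div_le_exp 2 (v - 5) ltac:(lia) ltac:(lra)) as H. simpl in H.
  assert (0 <= (1 + (v - 5) / (1 + 1)) * ((1 + (v - 5) / (1 + 1)) * 1)) by nra.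
  nra.
Qed.

Lemma exp_ge_poly6 s : 7 <= s -> 1085/117649 * s ^ 6 <= exp s.
Proof.
  intro Hs. replace s with (INR 7 + (s - 7)) at 2 by (simpl; ring). rewrite exp_plus.
  assert (E7 : 1085 <= exp (INR 7)) by (eapply Rle_trans; [| apply exp_INR_ge]; lra).
  pose proof (pow_one_plus_div_le_exp 6 (s - 7) ltac:(lia) ltac:(lra)).
  assert ((s / 7) ^ 6 <= (1 + (s - 7) / INR 6) ^ 6) by (apply pow_incr; split; [nra | simpl; lra]).
  assert (0 <= (s / 7) ^ 6) by (apply pow_le; lra).
  replace (1085/117649 * s ^ 6) with (1085 * (s / 7) ^ 6) by field.
  apply Rmult_le_compat; lra.
Qed.

(** * The function sinc *)

Lemma Rabs_sin_le x : Rabs (sin x) <= Rabs x.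
Proof.
  assert (Hpos : forall y, 0 < y -> Rabs (sin y) <= y).
  { intros y Hy. pose proof (sin_lt_x y Hy). destruct (Rle_lt_dec 1 y).
    - pose proof (SIN_bound y). apply Rabs_le; lra.
    - rewrite Rabs_right by (left; apply sin_pos_tech; lra). lra. }
  destruct (Rtotal_order x 0) as [H | [-> | H]].
  - replace (sin x) with (- sin (- x)) by (rewrite sin_neg; ring).
    rewrite Rabs_Ropp, (Rabs_left x) by lra. apply Hpos; lra.
  - rewrite sin_0, Rabs_R0; lra.
  - rewrite (Rabs_right x) by lra. apply Hpos; lra.
Qed.

Lemma sinc_neg x : sinc (- x) = sinc x.
Proof.
  unfold sinc. destruct (Req_EM_T (- x) 0), (Req_EM_T x 0); try lra.
  rewrite sin_neg. field. assumption.
Qed.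

Lemma sinc_sq_le_1 x : sinc x ^ 2 <= 1.
Proof.
  unfold sinc. destruct (Req_EM_T x 0) as [_ | Hx]; [lra |].
  assert (Hs : sin x ^ 2 <= x ^ 2).
  { pose proof (Rabs_sin_le x). pose proof (Rabs_pos (sin x)).
    rewrite <- (pow2_abs (sin x)), <- (pow2_abs x). nra. }
  assert (Hx2 : 0 < x ^ 2) by (rewrite <- Rsqr_pow2; apply Rsqr_pos_lt, Hx).
  replace ((sin x / x) ^ 2) with (sin x ^ 2 / x ^ 2) by (field; assumption).
  apply Rmult_le_reg_r with (x ^ 2); [exact Hx2 |].
  unfold Rdiv. rewrite Rmult_assoc, Rinv_l by lra. lra.
Qed.

Lemma sinc_sq_le_inv_sq x : x <> 0 -> sinc x ^ 2 <= / x ^ 2.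
Proof.
  intro Hx. unfold sinc. destruct (Req_EM_T x 0); [contradiction |].
  pose proof (SIN_bound x).
  assert (Hx2 : 0 < x ^ 2) by (rewrite <- Rsqr_pow2; apply Rsqr_pos_lt, Hx).
  replace ((sin x / x) ^ 2) with (sin x ^ 2 * / x ^ 2) by (field; assumption).
  assert (sin x ^ 2 <= 1) by nra.
  pose proof (Rinv_0_lt_compat _ Hx2). nra.
Qed.

Lemma sinc_sq_le_rational x : sinc x ^ 2 <= 2 / (1 + x ^ 2).
Proof.
  pose proof (pow2_ge_0 x).
  destruct (Rle_dec (x ^ 2) 1) as [Hle | Hgt].
  - apply Rle_trans with 1; [apply sinc_sq_le_1 |].
    apply Rmult_le_reg_r with (1 + x ^ 2); [lra |].
    unfold Rdiv. rewrite Rmult_assoc, Rinv_l by lra. lra.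
  - assert (Hx : x <> 0) by (intros ->; simpl in Hgt; lra).
    apply Rle_trans with (/ x ^ 2); [apply sinc_sq_le_inv_sq, Hx |].
    apply Rmult_le_reg_r with (x ^ 2 * (1 + x ^ 2)); [nra |].
    replace (/ x ^ 2 * (x ^ 2 * (1 + x ^ 2))) with (1 + x ^ 2) by (field; assumption).
    replace (2 / (1 + x ^ 2) * (x ^ 2 * (1 + x ^ 2))) with (2 * x ^ 2) by (field; lra). lra.
Qed.

Lemma sinc_ge x : x ^ 2 < 3 -> 1 - x ^ 2 / 6 <= sinc x.
Proof.
  intro Hx. unfold sinc. destruct (Req_EM_T x 0) as [_ | Hx0]; [nra |].
  assert (Hpos : forall y, 0 < y -> y ^ 2 < 3 -> 1 - y ^ 2 / 6 <= sin y / y).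
  { intros y Hy Hy2. assert (y <= PI) by (pose proof PI2_3_2; nra).
    destruct (sin_bound y 0 ltac:(lra) ltac:(assumption)) as [Hsin _].
    unfold sin_approx, sin_term in Hsin. simpl in Hsin.
    apply Rmult_le_reg_r with y; [exact Hy |].
    unfold Rdiv. rewrite Rmult_assoc, Rinv_l by lra. nra. }
  destruct (Rlt_dec 0 x); [apply Hpos; assumption |].
  replace (sin x / x) with (sin (- x) / - x) by (rewrite sin_neg; field; assumption).
  replace (x ^ 2) with ((- x) ^ 2) by ring. apply Hpos; [lra | nra].
Qed.

Lemma sinc_sq_ge x : 1 - x ^ 2 / 3 <= sinc x ^ 2.
Proof.
  destruct (Rlt_dec (x ^ 2) 3) as [Hlt | Hge].
  - pose proof (sinc_ge x Hlt). assert (0 <= 1 - x ^ 2 / 6) by nra. nra.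
  - pose proof (pow2_ge_0 (sinc x)). nra.
Qed.

Lemma continuity_sinc : continuity sinc.
Proof.
  intro x0. destruct (Req_EM_T x0 0) as [-> | Hx0].
  - intros eps Heps. exists (Rmin 1 eps). split; [apply Rmin_pos; lra |].
    intros y [_ Hy]. simpl in *. unfold Rdist in *. rewrite Rminus_0_r in Hy.
    assert (Hy1 : Rabs y < 1) by (eapply Rlt_le_trans; [apply Hy | apply Rmin_l]).
    assert (Hye : Rabs y < eps) by (eapply Rlt_le_trans; [apply Hy | apply Rmin_r]).
    assert (Hy2 : y ^ 2 <= Rabs y) by (rewrite <- (pow2_abs y); pose proof (Rabs_pos y); nra).
    pose proof (sinc_ge y ltac:(lra)).
    assert (sinc y <= 1) by (pose proof (sinc_sq_le_1 y); nra).
    unfold sinc at 2. destruct (Req_EM_T 0 0); [| lra].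
    rewrite Rabs_left1 by lra. lra.
  - apply continuity_pt_locally_ext with (f := fun y => sin y / y) (a := Rabs x0).
    + apply Rabs_pos_lt, Hx0.
    + intros y Hy. unfold sinc. destruct (Req_EM_T y 0) as [-> |]; [| reflexivity].
      unfold Rdist in Hy. rewrite Rminus_0_l, Rabs_Ropp in Hy. lra.
    + apply continuity_pt_div; [apply continuity_sin | | exact Hx0].
      apply derivable_continuous_pt, derivable_pt_id.
Qed.

(** * Limits, partial sums and integrals *)

Lemma Un_cv_le_of_eventually_le (u : nat -> R) l b N :
  Un_cv u l -> (forall n, (N <= n)%nat -> u n <= b) -> l <= b.
Proof.
  intros Hu Hb. destruct (Rle_dec l b) as [| Hlt]; [assumption | exfalso].
  destruct (Hu (l - b)) as [N1 HN1]; [lra |].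
  specialize (HN1 (Nat.max N N1) ltac:(lia)). specialize (Hb (Nat.max N N1) ltac:(lia)).
  unfold Rdist in HN1. apply Rabs_def2 in HN1. lra.
Qed.

Lemma Un_cv_ge_of_eventually_ge (u : nat -> R) l b N :
  Un_cv u l -> (forall n, (N <= n)%nat -> b <= u n) -> b <= l.
Proof.
  intros Hu Hb. destruct (Rle_dec b l) as [| Hlt]; [assumption | exfalso].
  destruct (Hu (b - l)) as [N1 HN1]; [lra |].
  specialize (HN1 (Nat.max N N1) ltac:(lia)). specialize (Hb (Nat.max N N1) ltac:(lia)).
  unfold Rdist in HN1. apply Rabs_def2 in HN1. lra.
Qed.

Lemma exists_INR_ge x : exists n : nat, x <= INR n.
Proof.
  destruct (archimed x) as [H1 _].
  destruct (Z.le_gt_cases 0 (up x)) as [Hup | Hup].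
  - exists (Z.to_nat (up x)). rewrite INR_IZR_INZ, Z2Nat.id by assumption. lra.
  - exists 0%nat. apply IZR_lt in Hup. simpl. lra.
Qed.

Lemma exists_INR_between y : 3 <= y -> exists N : nat, (3 <= N)%nat /\ INR N <= y /\ y - 1 < INR N.
Proof.
  intro Hy. destruct (archimed y) as [H1 H2].
  assert (Hz : (0 <= up y - 1)%Z) by (assert (IZR 1 < IZR (up y)) as H by lra; apply lt_IZR in H; lia).
  exists (Z.to_nat (up y - 1)).
  assert (E : INR (Z.to_nat (up y - 1)) = IZR (up y) - 1).
  { rewrite INR_IZR_INZ, Z2Nat.id, minus_IZR by assumption. reflexivity. }
  rewrite E. split; [| lra].
  assert (H : INR 2 < INR (Z.to_nat (up y - 1))) by (rewrite E; simpl; lra).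
  apply INR_lt in H. lia.
Qed.

(* [psum f N] is [f 1 + ... + f N]: the sequences of the paper are indexed from 1. *)
Fixpoint psum (f : nat -> R) (N : nat) : R :=
  match N with O => 0 | S k => psum f k + f (S k) end.

Lemma psum_S f n : psum f (S n) = sum_f_R0 (fun k => f (S k)) n.
Proof. induction n as [| n IH]; simpl in *; [ring | rewrite IH; ring]. Qed.

Lemma Un_cv_psum_of_infinite_sum f l : infinite_sum (fun k => f (S k)) l -> Un_cv (psum f) l.
Proof.
  intros Hf eps Heps. destruct (Hf eps Heps) as [N HN]. exists (S N). intros [| n] Hn; [lia |].
  rewrite psum_S. apply HN. lia.
Qed.

Definition RInt_cont (f : R -> R) (Hc : continuity f) (a b : R) : Riemann_integrable f a b.
Proof.
  destruct (Rle_dec a b).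
  - apply continuity_implies_RiemannInt; auto.
  - apply RiemannInt_P1, continuity_implies_RiemannInt; [lra | auto].
Defined.

Lemma RiemannInt_ge_0 {f a b} (pr : Riemann_integrable f a b) :
  a <= b -> (forall x, a < x < b -> 0 <= f x) -> 0 <= RiemannInt pr.
Proof.
  intros Hab Hf.
  pose proof (RiemannInt_P19 (RiemannInt_P14 a b 0) pr Hab Hf) as H.
  rewrite RiemannInt_P15 in H. lra.
Qed.

Lemma RiemannInt_scal {f c a b} (pr : Riemann_integrable (fun t => c * f t) a b)
  (pr2 : Riemann_integrable f a b) : a <= b -> RiemannInt pr = c * RiemannInt pr2.
Proof.
  intro Hab.
  pose (pr0 := RiemannInt_P14 a b 0).
  rewrite (RiemannInt_P18 pr (RiemannInt_P10 c pr0 pr2) Hab);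
    [| intros; unfold fct_cte; ring].
  rewrite (RiemannInt_P13 pr0 pr2). unfold pr0. rewrite RiemannInt_P15. ring.
Qed.

Section SymmetricIntegral.

Variable f : R -> R.
Hypothesis f_cont : continuity f.
Hypothesis f_ge_0 : forall x, 0 <= f x.

Let sym_int (M : R) : R := RiemannInt (RInt_cont f f_cont (- M) M).

Lemma sym_int_le M1 M2 : 0 <= M1 <= M2 -> sym_int M1 <= sym_int M2.
Proof.
  intro HM. unfold sym_int.
  rewrite <- (RiemannInt_P26 (RInt_cont f f_cont (- M2) (- M1)) (RInt_cont f f_cont (- M1) M2)).
  rewrite <- (RiemannInt_P26 (RInt_cont f f_cont (- M1) M1) (RInt_cont f f_cont M1 M2)
                             (RInt_cont f f_cont (- M1) M2)).
  pose proof (RiemannInt_ge_0 (RInt_cont f f_cont (- M2) (- M1)) ltac:(lra) (fun x _ => f_ge_0 x)).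
  pose proof (RiemannInt_ge_0 (RInt_cont f f_cont M1 M2) ltac:(lra) (fun x _ => f_ge_0 x)).
  lra.
Qed.

Lemma improper_integral_R_of_bounded B :
  (forall M, 0 <= M -> sym_int M <= B) ->
  exists L, improper_integral_R f L /\ forall M, 0 <= M -> sym_int M <= L.
Proof.
  intro HB.
  assert (Hgrow : Un_growing (fun n => sym_int (INR n))).
  { intro n. apply sym_int_le. rewrite S_INR. pose proof (pos_INR n). lra. }
  assert (Hub : has_ub (fun n => sym_int (INR n))).
  { exists B. intros x [n ->]. apply HB, pos_INR. }
  destruct (growing_cv _ Hgrow Hub) as [L HL].
  assert (HleL : forall M, 0 <= M -> sym_int M <= L).
  { intros M HM. destruct (exists_INR_ge M) as [n Hn].
    apply Rle_trans with (sym_int (INR n)); [apply sym_int_le; lra |].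
    apply (Un_cv_ge_of_eventually_ge _ _ _ n HL). intros m Hm.
    apply sym_int_le. split; [apply pos_INR | apply le_INR, Hm]. }
  exists L. split; [split | exact HleL].
  - intros a b. constructor. apply RInt_cont, f_cont.
  - intros eps Heps. destruct (HL eps Heps) as [N HN]. exists (INR N). intros M pr HM.
    specialize (HN N (le_n N)). unfold Rdist in HN.
    rewrite (RiemannInt_P5 pr (RInt_cont f f_cont (- M) M)). fold (sym_int M).
    assert (sym_int (INR N) <= sym_int M) by (apply sym_int_le; pose proof (pos_INR N); lra).
    pose proof (HleL M ltac:(pose proof (pos_INR N); lra)).
    rewrite Rabs_left1 in * by lra. lra.
Qed.

End SymmetricIntegral.

Lemma improper_integral_R_scal f c I :
  improper_integral_R f I -> improper_integral_R (fun t => c * f t) (c * I).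
Proof.
  intros [Hint Hcv]. split.
  - intros a b. destruct (Hint a b) as [pr]. constructor. exact (Riemann_integrable_scal c pr).
  - intros eps Heps. assert (Hc : 0 < Rabs c + 1) by (pose proof (Rabs_pos c); lra).
    destruct (Hcv (eps / (Rabs c + 1))) as [M0 HM0]; [apply Rdiv_lt_0_compat; lra |].
    exists (Rmax M0 0). intros M pr HM. destruct (Hint (- M) M) as [pr2].
    specialize (HM0 M pr2 ltac:(pose proof (Rmax_l M0 0); lra)).
    rewrite (RiemannInt_scal pr pr2) by (pose proof (Rmax_r M0 0); lra).
    rewrite <- Rmult_minus_distr_l, Rabs_mult.
    apply Rle_lt_trans with (Rabs c * (eps / (Rabs c + 1))).
    + apply Rmult_le_compat_l; [apply Rabs_pos | lra].
    + apply Rmult_lt_reg_r with (Rabs c + 1); [lra |].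
      replace (Rabs c * (eps / (Rabs c + 1)) * (Rabs c + 1)) with (Rabs c * eps) by (field; lra).
      nra.
Qed.

Section ScaledArctangent.

Variable alpha : R.
Hypothesis alpha_pos : 0 < alpha.

Let F : R -> R := mult_real_fct (2 / alpha) (comp atan (mult_real_fct alpha id)).

Lemma derivable_pt_lim_scaled_atan x : derivable_pt_lim F x (2 / (1 + (alpha * x) ^ 2)).
Proof.
  replace (2 / (1 + (alpha * x) ^ 2))
    with (2 / alpha * (/ (1 + (mult_real_fct alpha id x) ^ 2) * (alpha * 1))).
  - apply derivable_pt_lim_scal, derivable_pt_lim_comp;
      [apply derivable_pt_lim_scal, derivable_pt_lim_id | apply derivable_pt_lim_atan].
  - unfold mult_real_fct, id. pose proof (pow2_ge_0 (alpha * x)). field. lra.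
Qed.

Let F_C1 : C1_fun.
Proof.
  apply (@mkC1 F (fun x => exist _ _ (derivable_pt_lim_scaled_atan x))).
  intro x. apply continuity_pt_locally_ext with (f := fun x => 2 / (1 + (alpha * x) ^ 2)) (a := 1);
    [lra | reflexivity |].
  apply (continuity_pt_div (fun _ => 2) (fun x => 1 + (alpha * x) ^ 2));
    [apply continuity_pt_const; intros ? ?; reflexivity | apply derivable_continuous_pt; reg |].
  pose proof (pow2_ge_0 (alpha * x)). lra.
Defined.

(* The integrand is dominated by the derivative of [2 atan (alpha x) / alpha]. *)
Lemma RiemannInt_le_of_le_rational f M (pr : Riemann_integrable f (- M) M) :
  0 <= M -> (forall x, f x <= 2 / (1 + (alpha * x) ^ 2)) -> RiemannInt pr <= 2 * PI / alpha.
Proof.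
  intros HM Hf.
  apply Rle_trans with (RiemannInt (RiemannInt_P32 F_C1 (- M) M)).
  - apply RiemannInt_P19; [lra |]. intros x _. apply Hf.
  - rewrite FTC_Riemann. simpl. unfold F, mult_real_fct, comp, id.
    pose proof (atan_bound (alpha * M)). pose proof (atan_bound (alpha * - M)).
    assert (0 < 2 / alpha) by (apply Rdiv_lt_0_compat; lra).
    replace (2 * PI / alpha) with (2 / alpha * PI) by (field; lra).
    rewrite <- Rmult_minus_distr_l. apply Rmult_le_compat_l; lra.
Qed.

End ScaledArctangent.

(** * Infinite products of squared sinc factors *)

Fixpoint sinc_prod (a : nat -> R) (N : nat) (t : R) : R :=
  match N with
  | O => 1
  | S k => sinc_prod a k t * sinc (a (S k) * t) ^ 2
  end.

Lemma partial_prod_sinc_prod a1 N t : partial_prod a1 N t = sinc_prod (aseq a1) N t.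
Proof. induction N as [| N IH]; simpl; [reflexivity | rewrite IH; reflexivity]. Qed.

Section SincProduct.

Variable a : nat -> R.

Lemma sinc_prod_bounds N t : 0 <= sinc_prod a N t <= 1.
Proof.
  induction N as [| N IH]; simpl; [lra |].
  pose proof (sinc_sq_le_1 (a (S N) * t)). pose proof (pow2_ge_0 (sinc (a (S N) * t))). nra.
Qed.

Lemma sinc_prod_decreasing t : Un_decreasing (fun N => sinc_prod a N t).
Proof.
  intro N. simpl. pose proof (sinc_prod_bounds N t).
  pose proof (sinc_sq_le_1 (a (S N) * t)). pose proof (pow2_ge_0 (sinc (a (S N) * t))). nra.
Qed.

Lemma sinc_prod_le N M t : (N <= M)%nat -> sinc_prod a M t <= sinc_prod a N t.
Proof.
  induction 1 as [| M _ IH]; [lra |]. eapply Rle_trans; [apply sinc_prod_decreasing | exact IH].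
Qed.

Lemma sinc_prod_neg N t : sinc_prod a N (- t) = sinc_prod a N t.
Proof.
  induction N as [| N IH]; simpl; [reflexivity |].
  rewrite IH. replace (a (S N) * - t) with (- (a (S N) * t)) by ring.
  rewrite sinc_neg. reflexivity.
Qed.

Lemma continuity_sinc_prod N : continuity (sinc_prod a N).
Proof.
  induction N as [| N IH]; simpl; intro x.
  - apply continuity_pt_const. intros ? ?; reflexivity.
  - apply (continuity_pt_mult (sinc_prod a N) (fun t => sinc (a (S N) * t) ^ 2)); [apply IH |].
    apply (continuity_pt_comp (fun t => sinc (a (S N) * t)) (fun z => z ^ 2));
      [| apply derivable_continuous_pt, derivable_pt_pow].
    apply (continuity_pt_comp (fun t => a (S N) * t) sinc); [| apply continuity_sinc].
    apply derivable_continuous_pt, derivable_pt_scal, derivable_pt_id.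
Qed.

Lemma sinc_prod_has_lb t : has_lb (fun N => sinc_prod a N t).
Proof.
  exists 0. intros x [N ->]. unfold opp_seq. pose proof (sinc_prod_bounds N t). lra.
Qed.

Definition sinc_prod_lim (t : R) : R :=
  proj1_sig (decreasing_cv _ (sinc_prod_decreasing t) (sinc_prod_has_lb t)).

Lemma sinc_prod_cv t : Un_cv (fun N => sinc_prod a N t) (sinc_prod_lim t).
Proof. unfold sinc_prod_lim. destruct decreasing_cv; assumption. Qed.

Lemma sinc_prod_lim_le N t : sinc_prod_lim t <= sinc_prod a N t.
Proof.
  apply (Un_cv_le_of_eventually_le _ _ _ N (sinc_prod_cv t)). intros M HM. apply sinc_prod_le, HM.
Qed.

Lemma sinc_prod_lim_bounds t : 0 <= sinc_prod_lim t <= 1.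
Proof.
  split; [| apply (sinc_prod_lim_le 0)].
  apply (Un_cv_ge_of_eventually_ge _ _ _ 0 (sinc_prod_cv t)). intros. apply sinc_prod_bounds.
Qed.

Lemma sinc_prod_lim_neg t : sinc_prod_lim (- t) = sinc_prod_lim t.
Proof.
  apply UL_sequence with (fun N => sinc_prod a N t); [| apply sinc_prod_cv].
  intros eps Heps. destruct (sinc_prod_cv (- t) eps Heps) as [N HN]. exists N.
  intros n Hn. rewrite <- sinc_prod_neg. apply HN, Hn.
Qed.

Lemma sinc_prod_lim_le_rational t : sinc_prod_lim t <= 2 / (1 + (a 1 * t) ^ 2).
Proof.
  eapply Rle_trans; [apply (sinc_prod_lim_le 1) |]. simpl.
  rewrite Rmult_1_l. apply sinc_sq_le_rational.
Qed.

Hypothesis a_pos : forall n, 0 < a n.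

(* Each factor is at most [(a_n t)^-2]. *)
Lemma sinc_prod_le_exp_psum_ln N t :
  0 < t -> sinc_prod a N t <= exp (-2 * psum (fun n => ln (a n * t)) N).
Proof.
  intro Ht. induction N as [| N IH]; simpl; [rewrite Rmult_0_r, exp_0; lra |].
  set (z := a (S N) * t).
  assert (Hz : 0 < z) by (apply Rmult_lt_0_compat; [apply a_pos | exact Ht]).
  assert (Ez : exp (-2 * ln z) = / z ^ 2).
  { replace (-2 * ln z) with (- (INR 2 * ln z)) by (simpl; ring).
    rewrite exp_Ropp, exp_INR_mult, exp_ln by exact Hz. reflexivity. }
  rewrite Rmult_plus_distr_l, exp_plus, Ez.
  pose proof (sinc_sq_le_inv_sq z ltac:(lra)). pose proof (pow2_ge_0 (sinc z)).
  pose proof (sinc_prod_bounds N t).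
  apply Rmult_le_compat; lra.
Qed.

Variable sigma : R.
Hypothesis a_sum : Un_cv (psum a) sigma.

Lemma psum_le N M : (N <= M)%nat -> psum a N <= psum a M.
Proof. induction 1 as [| M _ IH]; simpl; [lra |]. pose proof (a_pos (S M)). lra. Qed.

Lemma psum_le_sigma N : psum a N <= sigma.
Proof. apply (Un_cv_ge_of_eventually_ge _ _ _ N a_sum). intros. apply psum_le; assumption. Qed.

Lemma a_le_sigma n : a (S n) <= sigma.
Proof.
  pose proof (psum_le_sigma (S n)). pose proof (psum_le 0 n ltac:(lia)). simpl in *. lra.
Qed.

(* From [sinc^2 x >= 1 - x^2/3] and [a_n^2 <= sigma a_n]. *)
Lemma sinc_prod_ge N M t : (N <= M)%nat ->
  sinc_prod a N t - t ^ 2 / 3 * sigma * (psum a M - psum a N) <= sinc_prod a M t.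
Proof.
  induction 1 as [| M _ IH]; [lra |]. simpl.
  set (b := a (S M)).
  pose proof (sinc_sq_ge (b * t)). pose proof (sinc_prod_bounds M t).
  pose proof (a_pos (S M)). pose proof (a_le_sigma M). pose proof (pow2_ge_0 t).
  assert (b ^ 2 <= sigma * b) by (unfold b in *; nra).
  assert (sinc_prod a M t * (1 - (b * t) ^ 2 / 3) <= sinc_prod a M t * sinc (b * t) ^ 2)
    by (apply Rmult_le_compat_l; lra).
  assert (0 <= (b * t) ^ 2 / 3) by (pose proof (pow2_ge_0 (b * t)); lra).
  assert (sinc_prod a M t * ((b * t) ^ 2 / 3) <= (b * t) ^ 2 / 3) by nra.
  assert (t ^ 2 * b ^ 2 <= t ^ 2 * (sigma * b)) by (apply Rmult_le_compat_l; lra).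
  replace ((b * t) ^ 2) with (t ^ 2 * b ^ 2) in * by ring. nra.
Qed.

Lemma sinc_prod_sub_lim_le N t :
  sinc_prod a N t - sinc_prod_lim t <= t ^ 2 / 3 * sigma * (sigma - psum a N).
Proof.
  enough (sinc_prod a N t - t ^ 2 / 3 * sigma * (sigma - psum a N) <= sinc_prod_lim t) by lra.
  apply (Un_cv_ge_of_eventually_ge _ _ _ N (sinc_prod_cv t)). intros M HM.
  pose proof (sinc_prod_ge N M t HM). pose proof (psum_le_sigma M).
  pose proof (pow2_ge_0 t). pose proof (psum_le_sigma 0). simpl in *.
  assert (t ^ 2 / 3 * sigma * (psum a M - psum a N) <= t ^ 2 / 3 * sigma * (sigma - psum a N))
    by (apply Rmult_le_compat_l; nra).
  lra.
Qed.

Lemma sinc_prod_lim_ge_near_0 t : Rabs t <= 1 / (2 * sigma) -> 11/12 <= sinc_prod_lim t.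
Proof.
  intro Ht. pose proof (sinc_prod_sub_lim_le 0 t) as H. simpl in H.
  assert (Hs : 0 < sigma) by (pose proof (a_pos 1); pose proof (a_le_sigma 0); lra).
  assert (Hts : (Rabs t * sigma) ^ 2 <= 1/4).
  { assert (Rabs t * sigma <= 1/2).
    { apply Rmult_le_reg_r with (/ sigma); [apply Rinv_0_lt_compat, Hs |].
      replace (Rabs t * sigma * / sigma) with (Rabs t) by (field; lra).
      replace (1 / (2 * sigma)) with (1 / 2 * / sigma) in Ht by (field; lra). lra. }
    assert (0 <= Rabs t * sigma) by (pose proof (Rabs_pos t); nra). nra. }
  rewrite Rpow_mult_distr, pow2_abs in Hts. nra.
Qed.

(* The convergence is uniform on bounded sets, by [sinc_prod_sub_lim_le]. *)
Lemma continuity_sinc_prod_lim : continuity sinc_prod_lim.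
Proof.
  intro y. assert (Hr : 0 < Rabs y + 1) by (pose proof (Rabs_pos y); lra).
  apply (CVU_continuity (sinc_prod a) sinc_prod_lim 0 (mkposreal _ Hr));
    [| intros; apply continuity_sinc_prod | unfold Boule; simpl; rewrite Rminus_0_r; lra].
  intros eps Heps.
  assert (Hsig : 0 <= sigma) by (pose proof (a_pos 1); pose proof (a_le_sigma 0); lra).
  set (K := (Rabs y + 1) ^ 2 / 3 * sigma + 1).
  assert (HK : 0 < K) by (unfold K; pose proof (pow2_ge_0 (Rabs y + 1)); nra).
  destruct (a_sum (eps / K)) as [N HN]; [apply Rdiv_lt_0_compat; assumption |].
  exists N. intros n t Hn Ht. unfold Boule in Ht. simpl in Ht. rewrite Rminus_0_r in Ht.
  specialize (HN n Hn). unfold Rdist in HN. apply Rabs_def2 in HN.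
  pose proof (sinc_prod_lim_le n t). pose proof (sinc_prod_sub_lim_le n t).
  pose proof (psum_le_sigma n). pose proof (pow2_ge_0 t).
  assert (Ht2 : t ^ 2 <= (Rabs y + 1) ^ 2) by (rewrite <- (pow2_abs t); pose proof (Rabs_pos t); nra).
  assert (t ^ 2 / 3 * sigma * (sigma - psum a n) <= K * (sigma - psum a n)).
  { apply Rmult_le_compat_r; [lra |].
    assert (0 <= ((Rabs y + 1) ^ 2 - t ^ 2) * sigma) by (apply Rmult_le_pos; lra).
    unfold K. lra. }
  assert (K * (sigma - psum a n) < K * (eps / K)) by (apply Rmult_lt_compat_l; lra).
  replace (K * (eps / K)) with eps in * by (field; lra).
  rewrite Rabs_left1 by lra. lra.
Qed.

Lemma sinc_prod_lim_normalized :
  exists c, 0 < c <= 12/11 * sigma /\ improper_integral_R (fun t => c * sinc_prod_lim t) 1.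
Proof.
  pose (Hc := continuity_sinc_prod_lim).
  assert (Hge0 : forall x, 0 <= sinc_prod_lim x) by (intro; apply sinc_prod_lim_bounds).
  assert (Hs : 0 < sigma) by (pose proof (a_pos 1); pose proof (a_le_sigma 0); lra).
  destruct (improper_integral_R_of_bounded sinc_prod_lim Hc Hge0 (2 * PI / a 1)) as [L [HL HleL]].
  { intros M HM. apply RiemannInt_le_of_le_rational; [apply a_pos | exact HM |].
    apply sinc_prod_lim_le_rational. }
  set (r := 1 / (2 * sigma)).
  assert (Hr : 0 < r) by (apply Rdiv_lt_0_compat; lra).
  assert (HLr : 11/12 * (r - - r) <= L).
  { eapply Rle_trans; [| apply (HleL r); lra].
    refine (proj1 (RiemannInt_const_bound (l := 11/12) (u := 1) _ _ _)); [lra |].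
    intros x Hx. split; [| apply sinc_prod_lim_bounds].
    apply sinc_prod_lim_ge_near_0. fold r. unfold Rabs. destruct (Rcase_abs x); lra. }
  assert (HL0 : 0 < L) by nra.
  exists (/ L). split; [split |].
  - apply Rinv_0_lt_compat, HL0.
  - replace (12/11 * sigma) with (/ (11/12 * (r - - r))) by (unfold r; field; lra).
    apply Rinv_le_contravar; [nra | exact HLr].
  - rewrite <- (Rinv_l L) by lra. apply improper_integral_R_scal, HL.
Qed.

End SincProduct.

(** * The sequence a_n *)

Lemma INR_ge_2 n : (2 <= n)%nat -> 2 <= INR n.
Proof. intro Hn. replace 2 with (INR 2) by (simpl; ring). apply le_INR, Hn. Qed.

Lemma ln_INR_pos n : (2 <= n)%nat -> 0 < ln (INR n).
Proof. intro Hn. pose proof (INR_ge_2 n Hn). rewrite <- ln_1. apply ln_increasing; lra. Qed.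

Definition inv_n_ln_sq (n : nat) : R := 1 / (INR n * ln (INR n) ^ 2).

Lemma aseq_eq a1 n : (2 <= n)%nat -> aseq a1 n = a1 * inv_n_ln_sq n.
Proof.
  intro Hn. unfold aseq, inv_n_ln_sq. replace (n <=? 1)%nat with false by (symmetry; apply Nat.leb_gt; lia).
  pose proof (INR_ge_2 n Hn). pose proof (ln_INR_pos n Hn). field. split; lra.
Qed.

Lemma aseq_pos a1 n : 0 < a1 -> 0 < aseq a1 n.
Proof.
  intro Ha. destruct (Nat.le_gt_cases n 1) as [Hn | Hn].
  - unfold aseq. replace (n <=? 1)%nat with true by (symmetry; apply Nat.leb_le, Hn). exact Ha.
  - rewrite aseq_eq by lia. unfold inv_n_ln_sq.
    pose proof (INR_ge_2 n ltac:(lia)). pose proof (ln_INR_pos n ltac:(lia)).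
    apply Rmult_lt_0_compat; [exact Ha |]. apply Rdiv_lt_0_compat; [lra |]. nra.
Qed.

Lemma inv_n_ln_sq_le_telescope n :
  (2 <= n)%nat -> inv_n_ln_sq (S n) <= 1 / ln (INR n) - 1 / ln (INR (S n)).
Proof.
  intro Hn. unfold inv_n_ln_sq. rewrite S_INR.
  pose proof (INR_ge_2 n Hn) as Hp. pose proof (ln_INR_pos n Hn) as HA.
  set (p := INR n) in *.
  assert (HAB : ln p < ln (p + 1)) by (apply ln_increasing; lra).
  pose proof (ln_succ_sub_ge p ltac:(lra)) as Hgap.
  set (A := ln p) in *. set (B := ln (p + 1)) in *.
  replace (1 / A - 1 / B) with ((B - A) / (A * B)) by (field; lra).
  assert (HB2 : 0 < (p + 1) * B ^ 2) by (apply Rmult_lt_0_compat; [lra | apply pow_lt; lra]).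
  apply div_le_div_cross; [exact HB2 | apply Rmult_lt_0_compat; lra |].
  assert (1 / (p + 1) * ((p + 1) * B ^ 2) = B * B) by (field; lra).
  assert (1 / (p + 1) * ((p + 1) * B ^ 2) <= (B - A) * ((p + 1) * B ^ 2))
    by (apply Rmult_le_compat_r; lra).
  nra.
Qed.

Lemma psum_aseq_le_tail a1 N : 0 < a1 -> (4 <= N)%nat ->
  psum (aseq a1) N <=
  a1 * (1 + inv_n_ln_sq 2 + inv_n_ln_sq 3 + inv_n_ln_sq 4 + 1 / ln (INR 4) - 1 / ln (INR N)).
Proof.
  intros Ha HN. induction HN as [| N HN IH]; cbn [psum].
  - change (aseq a1 1) with a1. rewrite (aseq_eq a1 2), (aseq_eq a1 3), (aseq_eq a1 4) by lia. lra.
  - rewrite aseq_eq by lia. pose proof (inv_n_ln_sq_le_telescope N ltac:(lia)). nra.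
Qed.

Lemma tail_constant_le :
  1 + inv_n_ln_sq 2 + inv_n_ln_sq 3 + inv_n_ln_sq 4 + 1 / ln (INR 4) <= 13/4.
Proof.
  unfold inv_n_ln_sq. pose proof ln_2_ge. pose proof ln_3_ge.
  replace (INR 2) with 2 by (simpl; ring). replace (INR 3) with 3 by (simpl; ring).
  replace (INR 4) with (2 * 2) by (simpl; ring). rewrite ln_mult by lra.
  assert (1 / (2 * ln 2 ^ 2) <= 1 / (2 * (9/13) ^ 2))
    by (apply Rmult_le_compat_l, Rinv_le_contravar; nra).
  assert (1 / (3 * ln 3 ^ 2) <= 1 / (3 * (12/11) ^ 2))
    by (apply Rmult_le_compat_l, Rinv_le_contravar; nra).
  assert (1 / (2 * 2 * (ln 2 + ln 2) ^ 2) <= 1 / (4 * (18/13) ^ 2))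
    by (apply Rmult_le_compat_l, Rinv_le_contravar; nra).
  assert (1 / (ln 2 + ln 2) <= 1 / (18/13))
    by (apply Rmult_le_compat_l, Rinv_le_contravar; nra).
  lra.
Qed.

Lemma psum_aseq_le a1 N : 0 < a1 -> psum (aseq a1) N <= 13/4 * a1.
Proof.
  intro Ha.
  assert (Hge4 : forall M, (4 <= M)%nat -> psum (aseq a1) M <= 13/4 * a1).
  { intros M HM. pose proof (psum_aseq_le_tail a1 M Ha HM). pose proof tail_constant_le.
    assert (0 < 1 / ln (INR M)) by (apply Rdiv_lt_0_compat; [lra | apply ln_INR_pos; lia]). nra. }
  destruct (Nat.le_gt_cases 4 N); [apply Hge4; assumption |].
  apply Rle_trans with (psum (aseq a1) 4); [| apply Hge4; lia].
  apply psum_le; [intro; apply aseq_pos, Ha | lia].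
Qed.

Lemma aseq_1_ge a1 gamma : 0 < a1 -> Un_cv (psum (aseq a1)) (gamma / 2) -> 2/13 * gamma <= a1.
Proof.
  intros Ha Hs. enough (gamma / 2 <= 13/4 * a1) by lra.
  apply (Un_cv_le_of_eventually_le _ _ _ 0 Hs). intros. apply psum_aseq_le, Ha.
Qed.

(** * The decay estimate *)

Lemma psum_ln_INR_le N : (1 <= N)%nat ->
  psum (fun n => ln (INR n)) N <= INR N * ln (INR N) - INR N + ln (INR N) + 1.
Proof.
  induction 1 as [| N HN IH]; cbn [psum]; [simpl; rewrite ln_1; lra |].
  rewrite S_INR. assert (1 <= INR N) by (replace 1 with (INR 1) by reflexivity; apply le_INR, HN).
  pose proof (ln_succ_sub_ge (INR N) ltac:(lra)).
  assert ((INR N + 1) * (1 / (INR N + 1)) = 1) by (field; lra).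
  assert ((INR N + 1) * (1 / (INR N + 1)) <= (INR N + 1) * (ln (INR N + 1) - ln (INR N)))
    by (apply Rmult_le_compat_l; lra).
  lra.
Qed.

Lemma ln_aseq_mult a1 t n : 0 < a1 -> 0 < t -> (2 <= n)%nat ->
  ln (aseq a1 n * t) = ln (a1 * t) - ln (INR n) - 2 * ln (ln (INR n)).
Proof.
  intros Ha Ht Hn. rewrite aseq_eq by exact Hn. unfold inv_n_ln_sq.
  pose proof (INR_ge_2 n Hn). pose proof (ln_INR_pos n Hn).
  assert (0 < ln (INR n) ^ 2) by (apply pow_lt; lra).
  replace (a1 * (1 / (INR n * ln (INR n) ^ 2)) * t) with (a1 * t * / INR n * / ln (INR n) ^ 2)
    by (field; lra).
  assert (Hat : 0 < a1 * t) by (apply Rmult_lt_0_compat; assumption).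
  assert (0 < / INR n) by (apply Rinv_0_lt_compat; lra).
  assert (0 < / ln (INR n) ^ 2) by (apply Rinv_0_lt_compat; lra).
  rewrite ln_mult by (try apply Rmult_lt_0_compat; assumption).
  rewrite ln_mult, !ln_Rinv, ln_pow by lra.
  simpl. ring.
Qed.

Lemma psum_ln_aseq_ge a1 t N M : 0 < a1 -> 0 < t -> (1 <= N)%nat -> (N <= M)%nat -> (2 <= M)%nat ->
  INR N * ln (a1 * t) - psum (fun n => ln (INR n)) N - 2 * (INR N - 1) * ln (ln (INR M))
  <= psum (fun n => ln (aseq a1 n * t)) N.
Proof.
  intros Ha Ht HN HNM HM. induction HN as [| N HN IH]; cbn [psum].
  - change (aseq a1 1) with a1. simpl. rewrite ln_1. lra.
  - rewrite ln_aseq_mult, S_INR by (try assumption; lia).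
    specialize (IH ltac:(lia)).
    assert (ln (ln (INR (S N))) <= ln (ln (INR M))).
    { apply ln_le_compat; [apply ln_INR_pos; lia |].
      apply ln_le_compat; [pose proof (INR_ge_2 (S N) ltac:(lia)); lra | apply le_INR, HNM]. }
    rewrite S_INR in *. lra.
Qed.

(* Choosing [N] with [N ln^2 N <= a1 t] makes the first [N] factors [(a_n t)^-2] small. *)
Lemma sinc_prod_lim_aseq_le a1 t N : 0 < a1 -> 0 < t -> (3 <= N)%nat ->
  INR N * ln (INR N) ^ 2 <= a1 * t ->
  sinc_prod_lim (aseq a1) t <= exp (2 + 2 * ln (INR N) - 2 * INR N).
Proof.
  intros Ha Ht HN Hx.
  eapply Rle_trans; [apply (sinc_prod_lim_le _ N) |].
  eapply Rle_trans; [apply sinc_prod_le_exp_psum_ln; [intro; apply aseq_pos, Ha | exact Ht] |].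
  apply exp_le_compat.
  pose proof (psum_ln_aseq_ge a1 t N N Ha Ht ltac:(lia) (le_n N) ltac:(lia)).
  pose proof (psum_ln_INR_le N ltac:(lia)).
  assert (H3 : 3 <= INR N) by (replace 3 with (INR 3) by (simpl; ring); apply le_INR, HN).
  assert (HlnN : 1 <= ln (INR N)) by (pose proof ln_3_ge; pose proof (ln_le_compat 3 (INR N)); lra).
  assert (Hlnln : 0 <= ln (ln (INR N))) by (rewrite <- ln_1; apply ln_le_compat; lra).
  assert (Hlx : ln (INR N) + 2 * ln (ln (INR N)) <= ln (a1 * t)).
  { assert (0 < INR N * ln (INR N) ^ 2) by (apply Rmult_lt_0_compat; [lra | apply pow_lt; lra]).
    pose proof (ln_le_compat _ _ H1 Hx) as Hl. rewrite ln_mult, ln_pow in Hl by (try apply pow_lt; lra).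
    simpl in Hl. lra. }
  assert (0 <= INR N * (ln (a1 * t) - ln (INR N) - 2 * ln (ln (INR N))))
    by (apply Rmult_le_pos; lra).
  nra.
Qed.

Lemma ln_sub_id_antitone z1 z2 : 1 <= z1 -> z1 <= z2 -> ln z2 - z2 <= ln z1 - z1.
Proof.
  intros H1 H2. pose proof (ln_le_sub_1 (z2 / z1) ltac:(apply Rdiv_lt_0_compat; lra)) as H.
  unfold Rdiv in H. rewrite ln_mult, ln_Rinv in H by (try apply Rinv_0_lt_compat; lra).
  assert (z2 * / z1 - 1 <= z2 - z1).
  { replace (z2 * / z1 - 1) with ((z2 - z1) / z1) by (field; lra).
    apply Rmult_le_reg_r with z1; [lra |]. unfold Rdiv. rewrite Rmult_assoc, Rinv_l by lra. nra. }
  lra.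
Qed.

(* Writing [x2 = x1 e^r], this is [(1 + r/L)^2 <= (1 + r/2)^2 <= e^r] for [L = ln x1 >= 2]. *)
Lemma div_ln_sq_le x1 x2 : 0 < x1 -> 2 <= ln x1 -> x1 <= x2 -> x1 / ln x1 ^ 2 <= x2 / ln x2 ^ 2.
Proof.
  intros Hx1 HL H12.
  set (L := ln x1) in *. set (r := ln x2 - L).
  assert (Hr : 0 <= r) by (unfold r, L; pose proof (ln_le_compat x1 x2 Hx1 H12); lra).
  assert (Hx2 : x2 = x1 * exp r).
  { unfold r, L, Rminus. rewrite exp_plus, exp_Ropp, !exp_ln by lra. field. lra. }
  replace (ln x2) with (L + r) by (unfold r; ring). rewrite Hx2.
  pose proof (pow_one_plus_div_le_exp 2 r ltac:(lia) Hr) as He. simpl INR in He.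
  apply div_le_div_cross; [apply pow_lt; lra | apply pow_lt; lra |].
  set (q := 1 + r / (1 + 1)) in *.
  assert (Hq : (L + r) ^ 2 <= (q * L) ^ 2) by (apply pow_incr; unfold q; nra).
  assert (0 <= L ^ 2) by nra.
  replace (q * L) with (L * q) in Hq by ring. rewrite Rpow_mult_distr in Hq.
  assert (q ^ 2 * L ^ 2 <= exp r * L ^ 2) by (apply Rmult_le_compat_r; [lra | simpl in *; lra]).
  apply Rmult_le_compat_l with (r := x1) in Hq; [| lra]. nra.
Qed.

Lemma decay_exponent_ineq s u : 7 <= s -> 1085/117649 * s ^ 6 <= u ->
  s - 5 <= 4/13 * u / (s - 3/2) ^ 2 - 2/7 * u / s ^ 2.
Proof.
  intros Hs Hu. set (w := s - 3/2).
  assert (Hw : 11/2 <= w) by (unfold w; lra).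
  assert (Hu0 : 0 < u) by (assert (0 < s ^ 6) by (apply pow_lt; lra); nra).
  set (D := 4/13 * s ^ 2 - 2/7 * w ^ 2).
  assert (HD : 6/7 * s - 9/14 <= D) by (unfold D, w; nra).
  replace (4/13 * u / w ^ 2 - 2/7 * u / s ^ 2) with (u * D / (s ^ 2 * w ^ 2)) by (unfold D; field; lra).
  assert (H1 : u * D / s ^ 4 <= u * D / (s ^ 2 * w ^ 2)).
  { assert (w ^ 2 <= s ^ 2) by (unfold w; nra).
    assert (0 < s ^ 2 * w ^ 2) by (apply Rmult_lt_0_compat; apply pow_lt; lra).
    apply div_le_div_cross; [apply pow_lt; lra | assumption |].
    apply Rmult_le_compat_l; [nra |]. replace (s ^ 4) with (s ^ 2 * s ^ 2) by ring.
    apply Rmult_le_compat_l; [apply pow2_ge_0 | assumption]. }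
  assert (H2 : 1085/117649 * s ^ 2 * D <= u * D / s ^ 4).
  { apply Rmult_le_reg_r with (s ^ 4); [apply pow_lt; lra |].
    replace (u * D / s ^ 4 * s ^ 4) with (u * D) by (field; lra).
    replace (1085/117649 * s ^ 2 * D * s ^ 4) with (1085/117649 * s ^ 6 * D) by ring.
    apply Rmult_le_compat_r; nra. }
  assert (1085/117649 * (7 * s) * (6/7 * s - 9/14) <= 1085/117649 * s ^ 2 * D)
    by (apply Rmult_le_compat; nra).
  assert (s - 5 <= 1085/117649 * (7 * s) * (6/7 * s - 9/14)) by (pose proof (pow2_ge_0 (s - 19/2)); nra).
  lra.
Qed.

(* With [N = floor y'] for [y' = a1 t / ln^2 (a1 t) >= y]: then [N ln^2 N <= a1 t] and [N > y - 1]. *)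
Lemma sinc_prod_lim_aseq_le_exp a1 t y : 0 < a1 -> 0 < t -> 1 <= ln (a1 * t) -> 3 <= y ->
  y <= a1 * t / ln (a1 * t) ^ 2 ->
  sinc_prod_lim (aseq a1) t <= exp (4 + 2 * ln y - 2 * y).
Proof.
  intros Ha Ht Hlx Hy Hyx.
  set (x := a1 * t) in *. assert (Hx : 0 < x) by (apply Rmult_lt_0_compat; assumption).
  assert (Hlx2 : 0 < ln x ^ 2) by (apply pow_lt; lra).
  set (y' := x / ln x ^ 2) in *.
  assert (Hy'x : y' <= x).
  { unfold y'. apply Rmult_le_reg_r with (ln x ^ 2); [exact Hlx2 |].
    unfold Rdiv. rewrite Rmult_assoc, Rinv_l by lra.
    assert (1 <= ln x ^ 2) by nra. nra. }
  destruct (exists_INR_between y' ltac:(lra)) as [N [HN3 [HNy HNy1]]].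
  assert (HN : INR N * ln (INR N) ^ 2 <= x).
  { assert (H3 : 3 <= INR N) by (replace 3 with (INR 3) by (simpl; ring); apply le_INR, HN3).
    assert (0 <= ln (INR N)) by (rewrite <- ln_1; apply ln_le_compat; lra).
    assert (ln (INR N) <= ln x) by (apply ln_le_compat; lra).
    apply Rle_trans with (y' * ln x ^ 2); [apply Rmult_le_compat; [lra | nra | lra | apply pow_incr; lra] |].
    unfold y'. field_simplify; lra. }
  eapply Rle_trans; [apply (sinc_prod_lim_aseq_le a1 t N Ha Ht HN3 HN) |].
  apply exp_le_compat.
  pose proof (ln_sub_id_antitone (y - 1) (INR N) ltac:(lra) ltac:(lra)).
  pose proof (ln_le_compat (y - 1) y ltac:(lra) ltac:(lra)).
  lra.
Qed.

Lemma rhs_as_exp gamma t : 0 < gamma -> 0 < t ->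
  2 * (exp 1 * gamma) ^ 2 * t * exp (- (2/7) * (gamma * t / ln (gamma * t) ^ 2)) =
  2 * gamma * exp (2 + ln (gamma * t) - 2/7 * (gamma * t / ln (gamma * t) ^ 2)).
Proof.
  intros Hg Ht.
  replace (2 + ln (gamma * t) - 2/7 * (gamma * t / ln (gamma * t) ^ 2))
    with (INR 2 * 1 + (ln (gamma * t) + - (2/7) * (gamma * t / ln (gamma * t) ^ 2))) by (simpl; ring).
  rewrite !exp_plus, exp_INR_mult, exp_ln by (apply Rmult_lt_0_compat; lra). simpl. ring.
Qed.

(* Since [a1 t >= 2 gamma t / 13], this is a lower bound for [a1 t / ln^2 (a1 t)]. *)
Definition decay_threshold (u : R) : R := 2/13 * u / ln (2/13 * u) ^ 2.

Lemma decay_threshold_bounds u : 0 < u -> 7 <= ln u ->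
  3 <= decay_threshold u /\
  4 + 2 * ln (decay_threshold u) - 2 * decay_threshold u <= 2 + ln u - 2/7 * (u / ln u ^ 2).
Proof.
  intros Hu Hs.
  unfold decay_threshold. set (s := ln u) in *. set (xl := 2/13 * u). set (v := ln xl).
  assert (Hxl : 0 < xl) by (unfold xl; lra).
  assert (Hv : s - 2 <= v <= s - 3/2).
  { unfold v, xl. replace (2/13) with (/ (13/2)) by field.
    rewrite ln_mult, ln_Rinv by lra. pose proof ln_13_2_bounds. fold s. lra. }
  assert (Hv2 : 0 < v ^ 2) by (apply pow_lt; lra).
  set (yl := xl / v ^ 2). split.
  { unfold yl. pose proof (exp_ge_3_sq v ltac:(lra)) as H. unfold v at 2 in H. rewrite exp_ln in H by exact Hxl.
    apply Rmult_le_reg_r with (v ^ 2); [exact Hv2 |].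
    unfold Rdiv. rewrite Rmult_assoc, Rinv_l by lra. lra. }
  assert (Hlnyl : ln yl = v - 2 * ln v).
  { unfold yl, Rdiv. rewrite ln_mult, ln_Rinv, ln_pow by (try apply Rinv_0_lt_compat; lra).
    fold v. simpl. ring. }
  assert (Hlnv : 1 <= ln v) by (pose proof ln_3_ge; pose proof (ln_le_compat 3 v); lra).
  assert (Hkey : s - 5 <= 4/13 * u / (s - 3/2) ^ 2 - 2/7 * u / s ^ 2).
  { apply decay_exponent_ineq; [exact Hs |]. unfold s. rewrite <- (exp_ln u) at 2 by exact Hu.
    apply exp_ge_poly6, Hs. }
  assert (Hyl2 : 4/13 * u / (s - 3/2) ^ 2 <= 2 * yl).
  { unfold yl, xl. replace (2 * (2/13 * u / v ^ 2)) with (4/13 * u / v ^ 2) by (field; lra).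
    apply div_le_div_cross; [nra | exact Hv2 |]. assert (v ^ 2 <= (s - 3/2) ^ 2) by nra. nra. }
  unfold Rdiv in Hkey |- *. lra.
Qed.

Lemma sinc_prod_lim_aseq_bound_large a1 gamma c t :
  0 < a1 -> 0 < gamma -> 0 < t -> 2/13 * gamma <= a1 -> 0 < c <= 2 * gamma -> 7 <= ln (gamma * t) ->
  c * sinc_prod_lim (aseq a1) t <=
  2 * (exp 1 * gamma) ^ 2 * t * exp (- (2/7) * (gamma * t / ln (gamma * t) ^ 2)).
Proof.
  intros Ha Hg Ht Hal Hc Hs. rewrite rhs_as_exp by assumption.
  destruct (decay_threshold_bounds (gamma * t) ltac:(nra) Hs) as [Hy3 Hexp].
  assert (Hxl : 2/13 * (gamma * t) <= a1 * t) by nra.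
  assert (Hv : 2 <= ln (2/13 * (gamma * t))).
  { replace (2/13) with (/ (13/2)) by field. rewrite ln_mult, ln_Rinv by nra.
    pose proof ln_13_2_bounds. lra. }
  assert (Hlx : 2 <= ln (a1 * t)) by (eapply Rle_trans; [exact Hv | apply ln_le_compat; [nra | exact Hxl]]).
  assert (Hy : decay_threshold (gamma * t) <= a1 * t / ln (a1 * t) ^ 2)
    by (apply div_ln_sq_le; [nra | exact Hv | exact Hxl]).
  pose proof (sinc_prod_lim_aseq_le_exp a1 t _ Ha Ht ltac:(lra) Hy3 Hy).
  pose proof (sinc_prod_lim_bounds (aseq a1) t).
  apply Rle_trans with (2 * gamma * exp (4 + 2 * ln (decay_threshold (gamma * t)) - 2 * decay_threshold (gamma * t))).
  - apply Rmult_le_compat; lra.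
  - apply Rmult_le_compat_l; [lra | apply exp_le_compat, Hexp].
Qed.

Lemma exp_div_sq_le_on_piece s a b Eb : 0 < a <= s -> s <= b -> exp b <= Eb ->
  2/7 * Eb <= (a + 31/10) * a ^ 2 -> 2/7 * (exp s / s ^ 2) <= s + 31/10.
Proof.
  intros [Ha Has] Hb He Hq.
  assert (exp s <= exp b) by (apply exp_le_compat, Hb).
  assert (0 < s ^ 2) by (apply pow_lt; lra).
  assert (a ^ 2 <= s ^ 2) by (apply pow_incr; lra).
  assert ((a + 31/10) * a ^ 2 <= (s + 31/10) * s ^ 2) by (apply Rmult_le_compat; [lra | apply pow2_ge_0 | lra | lra]).
  apply Rmult_le_reg_r with (s ^ 2); [assumption |].
  replace (2/7 * (exp s / s ^ 2) * s ^ 2) with (2/7 * exp s) by (field; lra). lra.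
Qed.

(* Checked on the unit intervals [k, k+1] using [e <= 840/309]. *)
Lemma exp_div_sq_le_linear s : 0 < s -> 1/2 <= s ^ 2 -> s <= 7 -> 2/7 * (exp s / s ^ 2) <= s + 31/10.
Proof.
  intros H0 H1 H7.
  assert (Hs : 7/10 <= s) by nra.
  destruct (Rle_dec s 1).
  { assert (exp s <= 840/309) by (eapply Rle_trans; [apply exp_le_compat; eassumption |]; pose proof exp_1_bounds; lra).
    apply Rmult_le_reg_r with (s ^ 2); [lra |].
    replace (2/7 * (exp s / s ^ 2) * s ^ 2) with (2/7 * exp s) by (field; lra). nra. }
  destruct (Rle_dec s 2).
  { apply (exp_div_sq_le_on_piece s 1 (INR 2) ((840/309) ^ 2)); [lra | simpl; lra | apply exp_INR_le | lra]. }
  destruct (Rle_dec s 3).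
  { apply (exp_div_sq_le_on_piece s 2 (INR 3) ((840/309) ^ 3)); [lra | simpl; lra | apply exp_INR_le | lra]. }
  destruct (Rle_dec s 4).
  { apply (exp_div_sq_le_on_piece s 3 (INR 4) ((840/309) ^ 4)); [lra | simpl; lra | apply exp_INR_le | lra]. }
  destruct (Rle_dec s 5).
  { apply (exp_div_sq_le_on_piece s 4 (INR 5) ((840/309) ^ 5)); [lra | simpl; lra | apply exp_INR_le | lra]. }
  destruct (Rle_dec s 6).
  { apply (exp_div_sq_le_on_piece s 5 (INR 6) ((840/309) ^ 6)); [lra | simpl; lra | apply exp_INR_le | lra]. }
  apply (exp_div_sq_le_on_piece s 6 (INR 7) ((840/309) ^ 7)); [lra | simpl; lra | apply exp_INR_le | lra].
Qed.

Lemma exp_neg_11_10_ge : 3/10 <= exp (- (11/10)).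
Proof.
  replace (- (11/10)) with (-1 + - (1/10)) by field. rewrite exp_plus.
  pose proof exp_neg_1_bounds. pose proof (exp_ineq1_le (- (1/10))). pose proof (exp_pos (-1)). nra.
Qed.

(* For [ln (gamma t) <= 7] the right-hand side is at least [3 gamma / 5 >= c]. *)
Lemma sinc_prod_lim_aseq_bound_small a1 gamma c t :
  0 < gamma -> 0 < t -> 0 < c <= 6/11 * gamma ->
  0 < ln (gamma * t) -> 1/2 <= ln (gamma * t) ^ 2 -> ln (gamma * t) <= 7 ->
  c * sinc_prod_lim (aseq a1) t <=
  2 * (exp 1 * gamma) ^ 2 * t * exp (- (2/7) * (gamma * t / ln (gamma * t) ^ 2)).
Proof.
  intros Hg Ht Hc H0 H1 H7. rewrite rhs_as_exp by assumption.
  assert (Hu : 0 < gamma * t) by (apply Rmult_lt_0_compat; lra).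
  pose proof (exp_div_sq_le_linear (ln (gamma * t)) H0 H1 H7) as H. rewrite exp_ln in H by exact Hu.
  assert (3/10 <= exp (2 + ln (gamma * t) - 2/7 * (gamma * t / ln (gamma * t) ^ 2)))
    by (eapply Rle_trans; [apply exp_neg_11_10_ge | apply exp_le_compat; lra]).
  pose proof (sinc_prod_lim_bounds (aseq a1) t).
  assert (c * sinc_prod_lim (aseq a1) t <= 6/11 * gamma) by nra.
  nra.
Qed.

Lemma ln_bounds_of_ge_threshold gamma t : 0 < gamma -> t >= exp (1 / sqrt 2) / gamma ->
  0 < t /\ 0 < ln (gamma * t) /\ 1/2 <= ln (gamma * t) ^ 2.
Proof.
  intros Hg Ht.
  assert (Hsqrt : 0 < sqrt 2) by (apply sqrt_lt_R0; lra).
  assert (Hs0 : 0 < 1 / sqrt 2) by (apply Rdiv_lt_0_compat; lra).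
  assert (Hu : exp (1 / sqrt 2) <= gamma * t).
  { apply Rmult_le_reg_r with (/ gamma); [apply Rinv_0_lt_compat, Hg |].
    replace (gamma * t * / gamma) with t by (field; lra). unfold Rdiv in Ht. lra. }
  assert (Ht0 : 0 < t) by (pose proof (exp_pos (1 / sqrt 2)); nra).
  assert (Hs : 1 / sqrt 2 <= ln (gamma * t)) by (apply ln_ge_of_exp_le; [nra | exact Hu]).
  split; [exact Ht0 | split; [lra |]].
  replace (1/2) with ((1 / sqrt 2) ^ 2); [apply pow_incr; lra |].
  replace ((1 / sqrt 2) ^ 2) with (1 / (sqrt 2 * sqrt 2)) by (field; lra).
  rewrite sqrt_sqrt by lra. reflexivity.
Qed.

Theorem mainTheorem1 (gamma a1 : R) (hgamma : 0 < gamma) (ha1 : 0 < a1)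
  (hsum : infinite_sum (fun k => aseq a1 (S k)) (gamma / 2)) :
  exists W : R -> R,
    (forall t, Un_cv (fun N => partial_prod a1 N t) (W t)) /\
    (forall t, W (- t) = W t) /\
    (forall t, 0 <= W t) /\
    exists c : R, 0 < c /\
      improper_integral_R (fun t => c * W t) 1 /\
      forall t, t >= exp (1 / sqrt 2) / gamma ->
        0 <= c * W t /\
        c * W t <= 2 * (exp 1 * gamma)^2 * t *
                   exp (- (2 / 7) * (gamma * t / (ln (gamma * t))^2)).
Proof.
  assert (Hpos : forall n, 0 < aseq a1 n) by (intro; apply aseq_pos, ha1).
  pose proof (Un_cv_psum_of_infinite_sum _ _ hsum) as Hcv.
  exists (sinc_prod_lim (aseq a1)). split; [| split; [| split]].
  - intros t eps Heps. destruct (sinc_prod_cv (aseq a1) t eps Heps) as [N HN].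
    exists N. intros n Hn. rewrite partial_prod_sinc_prod. apply HN, Hn.
  - apply sinc_prod_lim_neg.
  - intro t. apply sinc_prod_lim_bounds.
  - destruct (sinc_prod_lim_normalized _ Hpos _ Hcv) as [c [[Hc0 Hc1] Hint]].
    exists c. split; [exact Hc0 | split; [exact Hint |]]. intros t Ht.
    destruct (ln_bounds_of_ge_threshold gamma t hgamma Ht) as [Ht0 [Hs0 Hs2]].
    pose proof (sinc_prod_lim_bounds (aseq a1) t).
    split; [apply Rmult_le_pos; lra |].
    destruct (Rle_dec (ln (gamma * t)) 7).
    + apply sinc_prod_lim_aseq_bound_small; lra.
    + apply sinc_prod_lim_aseq_bound_large; try lra. apply aseq_1_ge; assumption.
Qed.
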